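(* Let $N\ge 4$ be even and let $P_1,\dots,P_N$ be an $N$-periodic billiard trajectory in $E$. For $j=1,2$ let $\bar Q_{j,i}$ be the foot of the perpendicular from $f_j$ to the line $P_iP_{i+1}$, and let $\bar A_j$ be the signed area of the polygon $\bar Q_{j,1},\dots,\bar Q_{j,N}$. Then $\bar A_1=\bar A_2$, i.e. $\bar A_1/\bar A_2=1$.
   Context: Let $E$ be the ellipse $x^2/a^2+y^2/b^2=1$ with $a>b>0$, center $O=(0,0)$ and foci $f_1=(-\sqrt{a^2-b^2},0)$, $f_2=(\sqrt{a^2-b^2},0)$. An $N$-periodic billiard trajectory is a convex polygon with vertices $P_1,\dots,P_N\in E$ (indices mod $N$), listed counterclockwise and winding once around $O$, with $P_i\neq P_{i+1}$, such that at every vertex $P_i$ the normal line to $E$ at $P_i$ bisects the angle $\angle P_{i-1}P_iP_{i+1}$, and all of whose sides are tangent to a common ellipse confocal with $E$. The signed area of a polygon with vertices $W_i=(x_i,y_i)$, $i=1,\dots,N$ (indices mod $N$), is $S=\tfrac12\sum_{i=1}^N (x_iy_{i+1}-x_{i+1}y_i)$. *)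

From Stdlib Require Import Reals Lra Lia.
Open Scope R_scope.

Definition pt := (R * R)%type.

Definition padd (p q : pt) : pt := (fst p + fst q, snd p + snd q).
Definition psub (p q : pt) : pt := (fst p - fst q, snd p - snd q).
Definition pscale (s : R) (p : pt) : pt := (s * fst p, s * snd p).
Definition dot (p q : pt) : R := fst p * fst q + snd p * snd q.
Definition cross (p q : pt) : R := fst p * snd q - snd p * fst q.
Definition pnorm (p : pt) : R := sqrt (dot p p).

Definition on_ellipse (a b : R) (p : pt) : Prop :=
  (fst p) ^ 2 / a ^ 2 + (snd p) ^ 2 / b ^ 2 = 1.

Definition focus1 (a b : R) : pt := (- sqrt (a ^ 2 - b ^ 2), 0).
Definition focus2 (a b : R) : pt := (sqrt (a ^ 2 - b ^ 2), 0).

Definition ell_normal (a b : R) (p : pt) : pt := (fst p / a ^ 2, snd p / b ^ 2).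

Definition on_line (p q x : pt) : Prop := exists s : R, x = padd p (pscale s (psub q p)).

Definition line_tangent_ellipse (a' b' : R) (p q : pt) : Prop :=
  exists x : pt, on_line p q x /\ on_ellipse a' b' x /\
    forall y : pt, on_line p q y -> on_ellipse a' b' y -> y = x.

Definition confocal_ellipse (a b a' b' : R) : Prop :=
  0 < b' /\ b' < a' /\ a' ^ 2 - b' ^ 2 = a ^ 2 - b ^ 2.

(* The normal line at P_i bisects the angle P_{i-1} P_i P_{i+1}:
   the internal bisector direction u/|u| + v/|v| lies on the normal line. *)
Definition normal_bisects (a b : R) (pprev p pnext : pt) : Prop :=
  let u := psub pprev p in
  let v := psub pnext p in
  cross (padd (pscale (/ pnorm u) u) (pscale (/ pnorm v) v)) (ell_normal a b p) = 0.

(* Vertices P 0, ..., P (N-1), extended N-periodically to all of nat. *)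
Definition periodic (N : nat) (P : nat -> pt) : Prop := forall i, P (i + N)%nat = P i.

(* Convex polygon, listed counterclockwise, winding once around O, with
   vertices on E: the vertices are (a cos t_i, b sin t_i) with
   t_0 < t_1 < ... < t_{N-1} < t_0 + 2 pi; moreover every turn is a left turn. *)
Definition ccw_convex_once (a b : R) (N : nat) (P : nat -> pt) : Prop :=
  (exists t : nat -> R,
     (forall i, (i + 1 < N)%nat -> t i < t (S i)) /\
     t (N - 1)%nat < t 0%nat + 2 * PI /\
     (forall i, (i < N)%nat -> P i = (a * cos (t i), b * sin (t i)))) /\
  (forall i, 0 < cross (psub (P (S i)) (P i)) (psub (P (S (S i))) (P (S i)))).

(* N-periodic billiard trajectory in E (indices 0..N-1 instead of 1..N). *)
Definition billiard_Nperiodic (a b : R) (N : nat) (P : nat -> pt) : Prop :=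
  periodic N P /\
  (forall i, on_ellipse a b (P i)) /\
  ccw_convex_once a b N P /\
  (forall i, P i <> P (S i)) /\
  (forall i, normal_bisects a b (P i) (P (S i)) (P (S (S i)))) /\
  (exists a' b', confocal_ellipse a b a' b' /\
     forall i, line_tangent_ellipse a' b' (P i) (P (S i))).

Definition foot (f p q : pt) : pt :=
  let d := psub q p in padd p (pscale (dot (psub f p) d / dot d d) d).

Fixpoint sumR (n : nat) (g : nat -> R) : R :=
  match n with O => 0 | S m => sumR m g + g m end.

Definition signed_area (N : nat) (W : nat -> pt) : R :=
  / 2 * sumR N (fun i => fst (W i) * snd (W (Nat.modulo (S i) N))
                          - fst (W (Nat.modulo (S i) N)) * snd (W i)).

Definition pedal (f : pt) (P : nat -> pt) : nat -> pt := fun i => foot f (P i) (P (S i)).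

(* Idea: write the vertices as P k = (a cos T k, b sin T k) with lifted eccentric
   angles T increasing by 2 pi per period.  Every side is tangent to the confocal
   caustic, which lies inside E; so each chord touches the caustic between its
   endpoints and has the caustic on its left.  These two properties make chords
   rigid: a chord meeting the caustic cannot sit strictly inside the arc cut off
   by another.  The half-turn image of the trajectory, reindexed by h = N/2, has
   the same properties; interleaving it with the original forces
   T (k + h) = T k + pi, i.e. the trajectory is centrally symmetric.  Since
   f1 = -f2, the pedal polygon of f1 is then the point reflection of the pedal
   polygon of f2, cyclically relabelled, so the signed areas coincide. *)

From Stdlib Require Import Reals Lra Lia.
Open Scope R_scope.

Definition opp (p : pt) : pt := (- fst p, - snd p).
(* Twice the signed area of the triangle p q z: positive iff z lies to the left
   of the directed line p -> q. *)
Definition side (p q z : pt) : R := cross (psub q p) (psub z p).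
Definition conic (a b : R) (z : pt) : R := fst z ^ 2 / a ^ 2 + snd z ^ 2 / b ^ 2.
Definition ell_pt (a b u : R) : pt := (a * cos u, b * sin u).
Definition lerp (p q : pt) (s : R) : pt := padd p (pscale s (psub q p)).

Lemma side_lerp p q z1 z2 s :
  side p q (lerp z1 z2 s) = (1 - s) * side p q z1 + s * side p q z2.
Proof. destruct p, q, z1, z2; unfold side, lerp, cross, psub, padd, pscale; simpl; ring. Qed.

Lemma conic_lerp a b z1 z2 s : conic a b (lerp z1 z2 s) =
  (1 - s) * conic a b z1 + s * conic a b z2 - s * (1 - s) * conic a b (psub z2 z1).
Proof. destruct z1, z2; unfold conic, lerp, psub, padd, pscale; simpl; unfold Rdiv; ring. Qed.

Lemma conic_along_line a b p q s0 s :
  conic a b (lerp p q s) = conic a b (lerp p q s0)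
    + 2 * (s - s0) * (fst (lerp p q s0) * fst (psub q p) / a ^ 2
                      + snd (lerp p q s0) * snd (psub q p) / b ^ 2)
    + (s - s0) ^ 2 * conic a b (psub q p).
Proof. destruct p, q; unfold conic, lerp, padd, pscale, psub; simpl; unfold Rdiv; ring. Qed.

Lemma pt_neq_0 (z : pt) : z <> (0, 0) -> fst z <> 0 \/ snd z <> 0.
Proof.
  destruct z as [x y]; cbn; intro hz.
  destruct (Req_dec x 0); [right | now left]. intro; subst; auto.
Qed.

Lemma sq_div_le c d x : 0 < c -> c <= d -> x ^ 2 / d <= x ^ 2 / c.
Proof.
  intros hc hcd; unfold Rdiv.
  apply Rmult_le_compat_l; [apply pow2_ge_0 | apply Rinv_le_contravar; lra].
Qed.

Lemma sq_div_lt c d x : 0 < c -> c < d -> x <> 0 -> x ^ 2 / d < x ^ 2 / c.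
Proof.
  intros hc hcd hx; unfold Rdiv.
  apply Rmult_lt_compat_l; [|apply Rinv_lt_contravar; nra].
  rewrite <- Rsqr_pow2; now apply Rsqr_pos_lt.
Qed.

Lemma sq_div_nonneg c x : 0 < c -> 0 <= x ^ 2 / c.
Proof.
  intro hc; unfold Rdiv.
  apply Rmult_le_pos; [apply pow2_ge_0 | left; now apply Rinv_0_lt_compat].
Qed.

Lemma sq_div_pos c x : 0 < c -> x <> 0 -> 0 < x ^ 2 / c.
Proof.
  intros hc hx; unfold Rdiv.
  apply Rmult_lt_0_compat; [|now apply Rinv_0_lt_compat].
  rewrite <- Rsqr_pow2; now apply Rsqr_pos_lt.
Qed.

Lemma conic_pos a b z : 0 < a -> 0 < b -> z <> (0, 0) -> 0 < conic a b z.
Proof.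
  intros ha hb hz; unfold conic.
  assert (ha2 : 0 < a ^ 2) by (apply pow_lt; lra).
  assert (hb2 : 0 < b ^ 2) by (apply pow_lt; lra).
  destruct (pt_neq_0 z hz) as [hx | hy].
  - pose proof (sq_div_pos _ _ ha2 hx). pose proof (sq_div_nonneg _ (snd z) hb2). lra.
  - pose proof (sq_div_nonneg _ (fst z) ha2). pose proof (sq_div_pos _ _ hb2 hy). lra.
Qed.

Lemma conic_antimono a b a' b' z : 0 < a -> 0 < b ->
  a ^ 2 <= a' ^ 2 -> b ^ 2 <= b' ^ 2 -> conic a' b' z <= conic a b z.
Proof.
  intros ha hb hab hbb; unfold conic.
  assert (ha2 : 0 < a ^ 2) by (apply pow_lt; lra).
  assert (hb2 : 0 < b ^ 2) by (apply pow_lt; lra).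
  pose proof (sq_div_le _ _ (fst z) ha2 hab). pose proof (sq_div_le _ _ (snd z) hb2 hbb). lra.
Qed.

Lemma conic_antimono_strict a b a' b' z : 0 < a -> 0 < b ->
  a ^ 2 < a' ^ 2 -> b ^ 2 < b' ^ 2 -> z <> (0, 0) -> conic a' b' z < conic a b z.
Proof.
  intros ha hb hab hbb hz; unfold conic.
  assert (ha2 : 0 < a ^ 2) by (apply pow_lt; lra).
  assert (hb2 : 0 < b ^ 2) by (apply pow_lt; lra).
  pose proof (sq_div_le _ _ (fst z) ha2 (Rlt_le _ _ hab)).
  pose proof (sq_div_le _ _ (snd z) hb2 (Rlt_le _ _ hbb)).
  destruct (pt_neq_0 z hz) as [hx | hy].
  - pose proof (sq_div_lt _ _ _ ha2 hab hx). lra.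
  - pose proof (sq_div_lt _ _ _ hb2 hbb hy). lra.
Qed.

Lemma psub_nz p q : p <> q -> psub q p <> (0, 0).
Proof.
  destruct p, q; unfold psub; simpl; intros hpq E.
  inversion E; apply hpq; f_equal; lra.
Qed.

Lemma lerp_inj p q s1 s2 : p <> q -> lerp p q s1 = lerp p q s2 -> s1 = s2.
Proof.
  destruct p as [p1 p2], q as [q1 q2]; unfold lerp, padd, pscale, psub; simpl.
  intros hpq E; inversion E.
  destruct (Req_dec s1 s2) as [|hs]; auto. exfalso; apply hpq.
  assert (q1 - p1 = 0) by (apply (Rmult_eq_reg_l (s1 - s2)); lra).
  assert (q2 - p2 = 0) by (apply (Rmult_eq_reg_l (s1 - s2)); lra).
  f_equal; lra.
Qed.

(* A line meeting an ellipse in exactly one point stays outside it: the quadratic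
   form along the line is a parabola whose unique level-1 point must be its vertex. *)
Lemma tangent_line_outside a b p q : 0 < a -> 0 < b -> p <> q ->
  line_tangent_ellipse a b p q ->
  exists s0, conic a b (lerp p q s0) = 1 /\ forall s, 1 <= conic a b (lerp p q s).
Proof.
  intros ha hb hpq [X [[s0 HX] [HXE Huniq]]].
  pose proof (conic_pos a b _ ha hb (psub_nz _ _ hpq)) as hD.
  assert (H1 : conic a b (lerp p q s0) = 1) by (subst X; exact HXE).
  set (B := fst (lerp p q s0) * fst (psub q p) / a ^ 2
          + snd (lerp p q s0) * snd (psub q p) / b ^ 2).
  assert (HB : B = 0).
  { destruct (Req_dec B 0) as [|nB]; auto. exfalso.
    set (s1 := s0 - 2 * B / conic a b (psub q p)).
    assert (E1 : conic a b (lerp p q s1) = 1).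
    { rewrite (conic_along_line a b p q s0 s1), H1. fold B. unfold s1. field. lra. }
    assert (E2 : lerp p q s1 = X) by (apply Huniq; [exists s1 | ]; easy).
    rewrite HX in E2. apply lerp_inj in E2; auto.
    apply nB. unfold s1 in E2.
    assert (E3 : 2 * B / conic a b (psub q p) = 0) by lra.
    unfold Rdiv in E3. apply Rmult_integral in E3 as [E3 | E3]; [lra |].
    exfalso; revert E3; apply Rinv_neq_0_compat; lra. }
  exists s0; split; [exact H1 |]. intro s.
  rewrite (conic_along_line a b p q s0 s), H1. fold B; rewrite HB.
  pose proof (pow2_ge_0 (s - s0)). nra.
Qed.

Lemma collinear_on_line p q w : p <> q -> side p q w = 0 -> exists s, w = lerp p q s.
Proof.
  intros hpq hw. pose proof (pt_neq_0 _ (psub_nz _ _ hpq)) as hd.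
  destruct p as [p1 p2], q as [q1 q2], w as [w1 w2].
  unfold side, cross, lerp, padd, pscale, psub in *; cbn [fst snd] in *.
  set (d1 := q1 - p1) in *. set (d2 := q2 - p2) in *.
  set (v1 := w1 - p1) in *. set (v2 := w2 - p2) in *.
  set (den := d1 * d1 + d2 * d2).
  assert (hden : 0 < den).
  { unfold den. destruct hd as [hd | hd]; pose proof (Rsqr_pos_lt _ hd); unfold Rsqr in *; nra. }
  assert (A1 : (v1 * d1 + v2 * d2) * d1 = v1 * den).
  { unfold den. transitivity (v1 * d1 * d1 + d2 * (d1 * v2)); [ring |].
    replace (d1 * v2) with (d2 * v1) by lra. ring. }
  assert (A2 : (v1 * d1 + v2 * d2) * d2 = v2 * den).
  { unfold den. transitivity (v2 * d2 * d2 + d1 * (d2 * v1)); [ring |].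
    replace (d2 * v1) with (d1 * v2) by lra. ring. }
  exists ((v1 * d1 + v2 * d2) / den). unfold Rdiv. f_equal.
  - rewrite Rmult_assoc, (Rmult_comm (/ den)), <- Rmult_assoc, A1. unfold v1. field. lra.
  - rewrite Rmult_assoc, (Rmult_comm (/ den)), <- Rmult_assoc, A2. unfold v2. field. lra.
Qed.

(* An ellipse disjoint from the open inside of a line lies on one side of it:
   otherwise the segment joining points on both sides would cross the line
   strictly inside the ellipse. *)
Lemma outside_line_one_side a b p q z1 z2 : 0 < a -> 0 < b -> p <> q ->
  (forall s, 1 <= conic a b (lerp p q s)) ->
  conic a b z1 = 1 -> conic a b z2 = 1 -> 0 < side p q z1 -> side p q z2 < 0 -> False.
Proof.
  intros ha hb hpq hout h1 h2 l1 l2.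
  set (l := - side p q z2 / (side p q z1 - side p q z2)).
  assert (hl : 0 < l < 1).
  { unfold l. split.
    - unfold Rdiv. apply Rmult_lt_0_compat; [lra | apply Rinv_0_lt_compat; lra].
    - apply (Rmult_lt_reg_r (side p q z1 - side p q z2)); [lra |].
      unfold Rdiv. rewrite Rmult_assoc, Rinv_l; lra. }
  assert (hw : side p q (lerp z2 z1 l) = 0) by (rewrite side_lerp; unfold l; field; lra).
  destruct (collinear_on_line _ _ _ hpq hw) as [s hs].
  assert (hne : z2 <> z1) by (intro; subst; lra).
  pose proof (conic_pos a b _ ha hb (psub_nz _ _ hne)) as hq.
  pose proof (conic_lerp a b z2 z1 l) as hc. rewrite h1, h2, hs in hc.
  pose proof (hout s) as hs1.
  assert (0 < l * (1 - l) * conic a b (psub z1 z2)) by (apply Rmult_lt_0_compat; nra).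
  lra.
Qed.

Lemma sin_sum_identity A B :
  sin (2 * A) + sin (2 * B) - sin (2 * (A + B)) = 4 * sin A * sin B * sin (A + B).
Proof.
  rewrite !sin_2a, sin_plus, cos_plus.
  pose proof (sin2_cos2 A) as HA. pose proof (sin2_cos2 B) as HB. unfold Rsqr in *.
  transitivity (4 * sin A * sin B * (sin A * cos B + cos A * sin B)
     + 2 * sin A * cos A * (1 - cos B * cos B - sin B * sin B)
     + 2 * sin B * cos B * (1 - sin A * sin A - cos A * cos A)); [ring |].
  replace (1 - cos B * cos B - sin B * sin B) with 0 by lra.
  replace (1 - sin A * sin A - cos A * cos A) with 0 by lra. ring.
Qed.

Lemma side_ell_pt a b x x' u :
  side (ell_pt a b x) (ell_pt a b x') (ell_pt a b u) =
  4 * a * b * sin ((x' - x) / 2) * sin ((u - x') / 2) * sin ((u - x) / 2).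
Proof.
  transitivity (a * b * (sin (2 * ((u - x') / 2)) + sin (2 * ((x' - x) / 2))
                         - sin (2 * ((u - x') / 2 + (x' - x) / 2)))).
  - replace (2 * ((u - x') / 2)) with (u - x') by field.
    replace (2 * ((x' - x) / 2)) with (x' - x) by field.
    replace (2 * ((u - x') / 2 + (x' - x) / 2)) with (u - x) by field.
    unfold side, ell_pt, cross, psub; cbn [fst snd]. rewrite !sin_minus. ring.
  - rewrite sin_sum_identity. replace ((u - x') / 2 + (x' - x) / 2) with ((u - x) / 2) by field.
    ring.
Qed.

Section ChordSigns.
Variables (a b x x' : R).
Hypotheses (ha : 0 < a) (hb : 0 < b) (hx : 0 < x' - x < 2 * PI).

Let K_pos : 0 < 4 * a * b * sin ((x' - x) / 2).
Proof. repeat apply Rmult_lt_0_compat; try lra. apply sin_gt_0; lra. Qed.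

Lemma side_arc_nonpos u : x <= u <= x' ->
  side (ell_pt a b x) (ell_pt a b x') (ell_pt a b u) <= 0.
Proof.
  intro hu. rewrite side_ell_pt.
  assert (s1 : 0 <= sin ((u - x) / 2)) by (apply sin_ge_0; lra).
  assert (s2 : 0 <= sin (- ((u - x') / 2))) by (apply sin_ge_0; lra). rewrite sin_neg in s2.
  assert (0 <= 4 * a * b * sin ((x' - x) / 2) * sin ((u - x) / 2))
    by (apply Rmult_le_pos; [left; exact K_pos | exact s1]).
  nra.
Qed.

Lemma side_arc_neg u : x < u < x' ->
  side (ell_pt a b x) (ell_pt a b x') (ell_pt a b u) < 0.
Proof.
  intro hu. rewrite side_ell_pt.
  assert (s1 : 0 < sin ((u - x) / 2)) by (apply sin_gt_0; lra).
  assert (s2 : 0 < sin (- ((u - x') / 2))) by (apply sin_gt_0; lra). rewrite sin_neg in s2.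
  assert (0 < 4 * a * b * sin ((x' - x) / 2) * sin ((u - x) / 2))
    by (apply Rmult_lt_0_compat; [exact K_pos | exact s1]).
  nra.
Qed.

Lemma side_beyond_arc_pos u : x' < u < x + 2 * PI ->
  0 < side (ell_pt a b x) (ell_pt a b x') (ell_pt a b u).
Proof.
  intro hu. rewrite side_ell_pt.
  apply Rmult_lt_0_compat; [apply Rmult_lt_0_compat; [exact K_pos |] |]; apply sin_gt_0; lra.
Qed.

End ChordSigns.

Definition caustic_left (a b a' b' x x' : R) : Prop :=
  0 < x' - x < 2 * PI /\
  forall z, conic a' b' z = 1 -> 0 <= side (ell_pt a b x) (ell_pt a b x') z.

Definition chord_meets (a b a' b' y y' : R) : Prop :=
  exists s, 0 < s < 1 /\ conic a' b' (lerp (ell_pt a b y) (ell_pt a b y') s) = 1.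

Lemma nested_chords_equal a b a' b' x x' y y' : 0 < a -> 0 < b ->
  caustic_left a b a' b' x x' -> chord_meets a b a' b' y y' ->
  x <= y -> y < y' -> y' <= x' -> y = x /\ y' = x'.
Proof.
  intros ha hb [hx hleft] [s [hs hmeet]] h1 h2 h3.
  pose proof (hleft _ hmeet) as hz. rewrite side_lerp in hz.
  pose proof (side_arc_nonpos a b x x' ha hb hx y ltac:(lra)) as sy.
  pose proof (side_arc_nonpos a b x x' ha hb hx y' ltac:(lra)) as sy'.
  assert (ey : side (ell_pt a b x) (ell_pt a b x') (ell_pt a b y) = 0) by nra.
  assert (ey' : side (ell_pt a b x) (ell_pt a b x') (ell_pt a b y') = 0) by nra.
  split.
  - destruct (Req_dec y x) as [|ne]; auto.
    pose proof (side_arc_neg a b x x' ha hb hx y ltac:(lra)). lra.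
  - destruct (Req_dec y' x') as [|ne]; auto.
    pose proof (side_arc_neg a b x x' ha hb hx y' ltac:(lra)). lra.
Qed.

Lemma ell_pt_sub_PI a b x : ell_pt a b (x - PI) = opp (ell_pt a b x).
Proof.
  unfold ell_pt, opp; cbn [fst snd].
  rewrite cos_minus, sin_minus, cos_PI, sin_PI. f_equal; ring.
Qed.

Lemma ell_pt_add_PI a b x : ell_pt a b (x + PI) = opp (ell_pt a b x).
Proof. unfold ell_pt, opp; cbn [fst snd]. rewrite neg_cos, neg_sin. f_equal; ring. Qed.

Lemma side_opp p q z : side (opp p) (opp q) z = side p q (opp z).
Proof. destruct p, q, z; unfold side, opp, cross, psub; cbn [fst snd]; ring. Qed.

Lemma conic_opp a b z : conic a b (opp z) = conic a b z.
Proof. destruct z; unfold conic, opp; cbn [fst snd]; unfold Rdiv; ring. Qed.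

Lemma lerp_opp p q s : lerp (opp p) (opp q) s = opp (lerp p q s).
Proof. destruct p, q; unfold lerp, opp, padd, pscale, psub; cbn [fst snd]; f_equal; ring. Qed.

Lemma caustic_left_half_turn a b a' b' x x' :
  caustic_left a b a' b' x x' -> caustic_left a b a' b' (x - PI) (x' - PI).
Proof.
  intros [hx hleft]. split; [lra |]. intros z hz.
  rewrite !ell_pt_sub_PI, side_opp. apply hleft. now rewrite conic_opp.
Qed.

Lemma chord_meets_half_turn a b a' b' y y' :
  chord_meets a b a' b' y y' -> chord_meets a b a' b' (y - PI) (y' - PI).
Proof.
  intros [s [hs hmeet]]. exists s. split; [exact hs |].
  now rewrite !ell_pt_sub_PI, lerp_opp, conic_opp.
Qed.

Definition increasing (T : nat -> R) : Prop := forall k, T k < T (S k).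

Lemma increasing_lt T i j : increasing T -> (i < j)%nat -> T i < T j.
Proof. intros hT hij. induction hij; [apply hT |]. specialize (hT m). lra. Qed.

Lemma increasing_le T i j : increasing T -> (i <= j)%nat -> T i <= T j.
Proof.
  intros hT hij. destruct (Nat.eq_dec i j) as [-> | ne]; [lra |].
  left; apply increasing_lt; [exact hT | lia].
Qed.

Lemma increasing_bracket T v m : increasing T -> T 0%nat <= v -> v < T m ->
  exists j, T j <= v < T (S j).
Proof.
  intros hT h0. induction m as [| m IH]; intro hm; [lra |].
  destruct (Rlt_or_le v (T m)); [now apply IH | exists m; lra].
Qed.

Section Interleaving.
Variables (Gd Tn : R -> R -> Prop).
Hypothesis rigid : forall x x' y y', Gd x x' -> Tn y y' ->
  x <= y -> y < y' -> y' <= x' -> y = x /\ y' = x'.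

Definition admissible (T : nat -> R) : Prop :=
  increasing T /\ forall k, Gd (T k) (T (S k)) /\ Tn (T k) (T (S k)).

Lemma interleave T U j m : admissible T -> admissible U ->
  T j <= U m < T (S j) -> forall k, T (j + k)%nat <= U (m + k)%nat < T (S (j + k)).
Proof.
  intros [hT hTs] [hU hUs] h0 k. induction k as [| k [IH1 IH2]].
  { now rewrite !Nat.add_0_r. }
  rewrite !Nat.add_succ_r. pose proof (hT (S (j + k))). split.
  - destruct (Rlt_or_le (U (S (m + k))) (T (S (j + k)))) as [C | C]; auto.
    exfalso. destruct (hTs (j + k)%nat) as [G _]. destruct (hUs (m + k)%nat) as [_ M].
    destruct (rigid _ _ _ _ G M) as [_ E]; [lra | apply hU | lra | lra].
  - destruct (Rlt_or_le (U (S (m + k))) (T (S (S (j + k))))) as [C | C]; auto.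
    exfalso. destruct (hUs (m + k)%nat) as [G _]. destruct (hTs (S (j + k))) as [_ M].
    destruct (rigid _ _ _ _ G M) as [E _]; [lra | apply hT | lra | lra].
Qed.

(* If T advances by 2c every 2h steps and its half-period translate
   m |-> T (m + h) - c is admissible as well, then T advances by exactly c every
   h steps: comparing the two interleaved sequences half a period apart leaves
   no room for any other offset. *)
Lemma half_turn_shift T c h : 0 < c -> (1 <= h)%nat ->
  admissible T -> admissible (fun m => T (m + h)%nat - c) ->
  (forall k, T (k + 2 * h)%nat = T k + 2 * c) -> forall k, T (k + h)%nat = T k + c.
Proof.
  intros hc hh hTa hUa hper.
  assert (hT : increasing T) by apply hTa.
  assert (hp : forall m k, m = (k + 2 * h)%nat -> T m = T k + 2 * c) by (intros; subst; apply hper).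
  assert (hU : forall k, T (2 * h + k + h)%nat - c = T (k + h)%nat + c).
  { intro k. rewrite (hp _ (k + h)%nat) by lia. lra. }
  destruct (increasing_bracket T (T (2 * h + h)%nat - c) (4 * h) hT) as [j hj].
  { pose proof (increasing_le T 0 h hT ltac:(lia)). rewrite (hp (2 * h + h)%nat h) by lia. lra. }
  { pose proof (increasing_lt T h (2 * h) hT ltac:(lia)).
    rewrite (hp (2 * h + h)%nat h), (hp (4 * h)%nat (2 * h)%nat), (hp (2 * h)%nat 0%nat) in * by lia.
    lra. }
  assert (hI : forall k, T (j + k)%nat <= T (k + h)%nat + c < T (S (j + k))).
  { intro k. rewrite <- hU. exact (interleave T (fun m => T (m + h)%nat - c) j (2 * h) hTa hUa hj k). }
  destruct (hI 0%nat) as [A1 B1]. destruct (hI h) as [A2 B2].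
  rewrite Nat.add_0_r in A1, B1. rewrite (hp (h + h)%nat 0%nat) in A2, B2 by lia.
  destruct (Nat.lt_total j (2 * h)) as [hlt | [-> | hgt]]; [exfalso | | exfalso].
  - pose proof (increasing_le T (S j) (2 * h) hT ltac:(lia)).
    pose proof (increasing_le T (S (j + h)) (2 * h + h) hT ltac:(lia)).
    rewrite (hp (2 * h)%nat 0%nat), (hp (2 * h + h)%nat h) in * by lia. lra.
  - intro k. destruct (hI k) as [C1 _]. destruct (hI (k + h)%nat) as [C2 _].
    rewrite (hp (2 * h + k)%nat k) in C1 by lia.
    rewrite (hp (2 * h + (k + h))%nat (k + h)%nat), (hp (k + h + h)%nat k) in C2 by lia. lra.
  - pose proof (increasing_lt T (2 * h) j hT hgt).
    pose proof (increasing_lt T (2 * h + h) (j + h) hT ltac:(lia)).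
    rewrite (hp (2 * h)%nat 0%nat), (hp (2 * h + h)%nat h) in * by lia. lra.
Qed.

End Interleaving.

Lemma admissible_half_turn a b a' b' T h :
  admissible (caustic_left a b a' b') (chord_meets a b a' b') T ->
  admissible (caustic_left a b a' b') (chord_meets a b a' b') (fun m => T (m + h)%nat - PI).
Proof.
  intros [hinc hchords]. split.
  - intro k. apply Rplus_lt_compat_r, hinc.
  - intro k. split; [apply caustic_left_half_turn | apply chord_meets_half_turn]; apply hchords.
Qed.

Lemma sumR_ext n f g : (forall i, (i < n)%nat -> f i = g i) -> sumR n f = sumR n g.
Proof. induction n; intros H; simpl; [reflexivity |]. rewrite IHn, H; auto. Qed.

Lemma sumR_succ n F : sumR n (fun i => F (S i)) + F 0%nat = sumR n F + F n.
Proof. induction n; simpl; [ring | lra]. Qed.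

Lemma sumR_rotate N F m : (forall i, F (i + N)%nat = F i) ->
  sumR N (fun i => F (i + m)%nat) = sumR N F.
Proof.
  intro hF. induction m as [| m IH].
  - apply sumR_ext. intros i _. now rewrite Nat.add_0_r.
  - rewrite <- IH. pose proof (sumR_succ N (fun i => F (i + m)%nat)) as hs; cbn beta in hs.
    assert (e : F (N + m)%nat = F (0 + m)%nat) by (rewrite Nat.add_comm; exact (hF m)).
    rewrite (sumR_ext N (fun i => F (i + S m)%nat) (fun i => F (S i + m)%nat)); [lra |].
    intros i _. f_equal. lia.
Qed.

Lemma periodic_mod N W : (N <> 0)%nat -> periodic N W -> forall k, W (k mod N) = W k.
Proof.
  intros hN hW k. rewrite (Nat.div_mod_eq k N) at 2. generalize (k / N)%nat. intro q.
  induction q as [| q IH].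
  - now rewrite Nat.mul_0_r, Nat.add_0_l.
  - replace (N * S q + k mod N)%nat with ((N * q + k mod N) + N)%nat by lia. now rewrite hW.
Qed.

Lemma signed_area_periodic N W : (N <> 0)%nat -> periodic N W ->
  signed_area N W = / 2 * sumR N (fun i => cross (W i) (W (S i))).
Proof.
  intros hN hW. unfold signed_area. f_equal. apply sumR_ext. intros i _.
  rewrite (periodic_mod N W hN hW). unfold cross. ring.
Qed.

Lemma signed_area_half_turn N h W V : (N <> 0)%nat -> periodic N W -> periodic N V ->
  (forall k, W (k + h)%nat = opp (V k)) -> signed_area N W = signed_area N V.
Proof.
  intros hN hW hV hWV. rewrite !signed_area_periodic by assumption. f_equal.
  rewrite <- (sumR_rotate N (fun i => cross (W i) (W (S i))) h).
  - apply sumR_ext. intros i _. cbn beta. rewrite hWV.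
    replace (S (i + h)) with (S i + h)%nat by lia. rewrite hWV.
    unfold cross, opp; cbn [fst snd]. ring.
  - intro i. cbn beta. replace (S (i + N)) with (S i + N)%nat by lia. now rewrite !hW.
Qed.

Lemma foot_opp f p q : foot (opp f) (opp p) (opp q) = opp (foot f p q).
Proof.
  destruct f as [f1 f2], p as [p1 p2], q as [q1 q2].
  unfold foot, opp, padd, pscale, psub, dot; cbn [fst snd].
  replace ((- f1 - - p1) * (- q1 - - p1) + (- f2 - - p2) * (- q2 - - p2)) with
    ((f1 - p1) * (q1 - p1) + (f2 - p2) * (q2 - p2)) by ring.
  replace ((- q1 - - p1) * (- q1 - - p1) + (- q2 - - p2) * (- q2 - - p2)) with
    ((q1 - p1) * (q1 - p1) + (q2 - p2) * (q2 - p2)) by ring.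
  f_equal; ring.
Qed.

Lemma pedal_periodic N f P : periodic N P -> periodic N (pedal f P).
Proof.
  intros hP i. unfold pedal. replace (S (i + N)) with (S i + N)%nat by lia. now rewrite !hP.
Qed.

(* If the trajectory is centrally symmetric after h steps, the two focal pedal
   polygons are point reflections of each other up to relabelling, since
   f1 = -f2; hence their areas agree. *)
Lemma focal_pedal_areas_equal a b N h P : (N <> 0)%nat -> periodic N P ->
  (forall k, P (k + h)%nat = opp (P k)) ->
  signed_area N (pedal (focus1 a b) P) = signed_area N (pedal (focus2 a b) P).
Proof.
  intros hN hP hsym. apply (signed_area_half_turn N h); try apply pedal_periodic; auto.
  intro k. unfold pedal.
  replace (focus1 a b) with (opp (focus2 a b)) by (unfold focus1, focus2, opp; cbn; f_equal; ring).
  replace (S (k + h)) with (S k + h)%nat by lia. rewrite !hsym. apply foot_opp.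
Qed.

Lemma lift_angles a b N P : (N <> 0)%nat -> periodic N P -> ccw_convex_once a b N P ->
  exists T, increasing T /\ (forall k, T (k + N)%nat = T k + 2 * PI) /\
            (forall k, P k = ell_pt a b (T k)).
Proof.
  intros hN hP [[t [ht1 [ht2 ht3]]] _].
  set (T := fun k => t (k mod N)%nat + 2 * INR (k / N) * PI).
  assert (hTper : forall k, T (k + N)%nat = T k + 2 * PI).
  { intro k. unfold T. replace (k + N)%nat with (k + 1 * N)%nat by lia.
    rewrite Nat.Div0.mod_add, Nat.div_add, plus_INR by exact hN. simpl INR. ring. }
  assert (hTt : forall k, (k < N)%nat -> T k = t k).
  { intros k hk. unfold T. rewrite Nat.mod_small, Nat.div_small by exact hk. simpl INR. ring. }
  exists T; split; [| split; [exact hTper |]].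
  - intro k. induction k as [k IH] using (well_founded_induction Nat.lt_wf_0).
    destruct (Nat.lt_ge_cases (S k) N) as [hk | hk].
    + rewrite !hTt by lia. apply ht1. lia.
    + destruct (Nat.eq_dec k (N - 1)) as [-> | ne].
      * replace (S (N - 1)) with (0 + N)%nat by lia.
        rewrite hTper, !hTt by lia. exact ht2.
      * replace k with ((k - N) + N)%nat by lia.
        replace (S (k - N + N)) with (S (k - N) + N)%nat by lia.
        rewrite !hTper. specialize (IH (k - N)%nat ltac:(lia)). lra.
  - intro k. rewrite <- (periodic_mod N P hN hP k), ht3 by (apply Nat.mod_upper_bound, hN).
    unfold ell_pt, T. now rewrite cos_period, sin_period.
Qed.

Lemma ell_pt_on a b u : 0 < a -> 0 < b -> conic a b (ell_pt a b u) = 1.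
Proof.
  intros ha hb. unfold conic, ell_pt; cbn [fst snd].
  rewrite <- (sin2_cos2 u). unfold Rsqr. field. lra.
Qed.

Lemma conic_one_nz a b z : conic a b z = 1 -> z <> (0, 0).
Proof. intros hz ->. unfold conic in hz; cbn in hz. unfold Rdiv in hz. lra. Qed.

Lemma side_end p q : side p q q = 0.
Proof. destruct p, q; unfold side, cross, psub; cbn [fst snd]; ring. Qed.

(* A confocal ellipse tangent to a chord of E lies inside E: otherwise it would
   contain E and hence the midpoint of the chord. *)
Lemma caustic_inside a b a' b' p q : 0 < b -> b < a -> confocal_ellipse a b a' b' ->
  conic a b p = 1 -> conic a b q = 1 -> p <> q -> line_tangent_ellipse a' b' p q ->
  a' ^ 2 < a ^ 2 /\ b' ^ 2 < b ^ 2.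
Proof.
  intros hb hab [hb' [hab' hc]] hp hq hpq htan.
  enough (a' ^ 2 < a ^ 2) by lra.
  destruct (Rlt_or_le (a' ^ 2) (a ^ 2)) as [| hle]; [assumption | exfalso].
  destruct (tangent_line_outside a' b' p q ltac:(lra) hb' hpq htan) as [_ [_ hout]].
  pose proof (hout (/ 2)) as hmid.
  pose proof (conic_lerp a b p q (/ 2)) as hc2. rewrite hp, hq in hc2.
  pose proof (conic_pos a b _ ltac:(lra) hb (psub_nz _ _ hpq)).
  pose proof (conic_antimono a b a' b' (lerp p q (/ 2)) ltac:(lra) hb hle ltac:(lra)).
  lra.
Qed.

Lemma tangent_chord_meets a b a' b' x x' : 0 < a -> 0 < b -> 0 < a' -> 0 < b' ->
  a' ^ 2 < a ^ 2 -> b' ^ 2 < b ^ 2 -> ell_pt a b x <> ell_pt a b x' ->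
  line_tangent_ellipse a' b' (ell_pt a b x) (ell_pt a b x') ->
  chord_meets a b a' b' x x' /\
  forall s, 1 <= conic a' b' (lerp (ell_pt a b x) (ell_pt a b x') s).
Proof.
  intros ha hb ha' hb' haa hbb hne htan.
  destruct (tangent_line_outside a' b' _ _ ha' hb' hne htan) as [s0 [h1 hout]].
  split; [| exact hout]. exists s0. split; [| exact h1].
  pose proof (conic_antimono_strict a' b' a b _ ha' hb' haa hbb (conic_one_nz _ _ _ h1)) as hin.
  pose proof (conic_lerp a b (ell_pt a b x) (ell_pt a b x') s0) as hc.
  rewrite !ell_pt_on in hc by assumption.
  pose proof (conic_pos a b _ ha hb (psub_nz _ _ hne)) as hD.
  set (D := conic a b (psub (ell_pt a b x') (ell_pt a b x))) in *.
  assert (hprod : 0 < s0 * (1 - s0)).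
  { destruct (Rle_or_lt (s0 * (1 - s0)) 0) as [hle |]; [exfalso | assumption].
    assert (s0 * (1 - s0) * D <= 0) by nra. lra. }
  nra.
Qed.

(* The caustic lies to the left of a chord tangent to it whenever the next chord
   (counterclockwise) also meets it: the next tangency point is strictly to the left. *)
Lemma chord_caustic_left a b a' b' x x' x'' : 0 < a -> 0 < b -> 0 < a' -> 0 < b' ->
  x < x' -> x' < x'' < x + 2 * PI -> ell_pt a b x <> ell_pt a b x' ->
  (forall s, 1 <= conic a' b' (lerp (ell_pt a b x) (ell_pt a b x') s)) ->
  chord_meets a b a' b' x' x'' -> caustic_left a b a' b' x x'.
Proof.
  intros ha hb ha' hb' h1 h2 hne hout [s [hs hmeet]].
  split; [lra |]. intros z hz.
  destruct (Rlt_or_le (side (ell_pt a b x) (ell_pt a b x') z) 0) as [hneg |]; [exfalso | assumption].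
  apply (outside_line_one_side a' b' _ _ _ z ha' hb' hne hout hmeet hz); [| exact hneg].
  rewrite side_lerp, side_end.
  pose proof (side_beyond_arc_pos a b x x' ha hb ltac:(lra) x'' h2). nra.
Qed.

Lemma billiard_chords_admissible a b a' b' T : 0 < b -> b < a ->
  confocal_ellipse a b a' b' -> increasing T ->
  (forall k, T (S (S k)) < T k + 2 * PI) ->
  (forall k, ell_pt a b (T k) <> ell_pt a b (T (S k))) ->
  (forall k, line_tangent_ellipse a' b' (ell_pt a b (T k)) (ell_pt a b (T (S k)))) ->
  admissible (caustic_left a b a' b') (chord_meets a b a' b') T.
Proof.
  intros hb hab hconf hinc hwin hne htan.
  assert (ha : 0 < a) by lra. pose proof hconf as [hb' [hab' _]].
  destruct (caustic_inside a b a' b' _ _ hb hab hconf (ell_pt_on a b _ ha hb)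
              (ell_pt_on a b _ ha hb) (hne 0%nat) (htan 0%nat)) as [haa hbb].
  pose proof (fun k => tangent_chord_meets a b a' b' _ _ ha hb ltac:(lra) hb' haa hbb
                         (hne k) (htan k)) as hchord.
  split; [exact hinc |]. intro k. split; [| apply hchord].
  pose proof (hinc k). pose proof (hinc (S k)). pose proof (hwin k).
  apply (chord_caustic_left a b a' b' _ _ (T (S (S k))) ha hb ltac:(lra) hb');
    [lra | lra | apply hne | apply hchord | apply hchord].
Qed.

Theorem mainTheorem2 (a b : R) (N : nat) (P : nat -> pt) :
  0 < b -> b < a ->
  (4 <= N)%nat -> Nat.Even N ->
  billiard_Nperiodic a b N P ->
  signed_area N (pedal (focus1 a b) P) = signed_area N (pedal (focus2 a b) P).
Proof.
  intros hb hab hN [h hNh] [hper [_ [hconv [hne [_ [a' [b' [hconf htan]]]]]]]].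
  destruct (lift_angles a b N P ltac:(lia) hper hconv) as [T [hinc [hTper hPT]]].
  assert (hadm : admissible (caustic_left a b a' b') (chord_meets a b a' b') T).
  { apply billiard_chords_admissible; try assumption.
    - intro k. rewrite <- hTper. apply increasing_lt; [exact hinc | lia].
    - intro k. rewrite <- !hPT. apply hne.
    - intro k. rewrite <- !hPT. apply htan. }
  assert (hhalf : forall k, T (k + h)%nat = T k + PI).
  { subst N. apply (half_turn_shift (caustic_left a b a' b') (chord_meets a b a' b'));
      [| exact PI_RGT_0 | lia | exact hadm | now apply admissible_half_turn | exact hTper].
    intros x x' y y' hleft hmeet. apply (nested_chords_equal a b a' b'); auto; lra. }
  apply (focal_pedal_areas_equal a b N h P); [lia | exact hper |].
  intro k. rewrite !hPT, hhalf. apply ell_pt_add_PI.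
Qed.
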